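(* Let $P$ and $P'$ be simple polyhedra in $\mathbb{R}^3$ that are combinatorially equivalent to each other (with a fixed combinatorial equivalence). Suppose that each face of a natural development of $P$ is affine-equivalent to the corresponding face of a natural development of $P'$. Then $P$ and $P'$ are affine-equivalent.
   Context: A polyhedron is a connected two-dimensional polyhedral surface in $\mathbb{R}^3$ composed of finitely many convex polygons (its faces), connected in the sense that one can pass from any face to any other by crossing edges (not just vertices). A closed convex polyhedron is strictly convex if none of its dihedral angles equals $\pi$; a strictly convex closed polyhedron is simple if each of its vertices is incident to exactly three edges. Two polyhedra are combinatorially equivalent if there is an incidence-preserving bijection between their vertices, edges and faces. A natural development of a polyhedron $P$ is a finite collection of convex polygons in the plane in one-to-one correspondence with the faces of $P$, each polygon congruent to the corresponding face, such that two elements (faces, sides, vertices) of the collection are incident iff the corresponding elements of $P$ are incident. Two polygons (resp. two combinatorially equivalent polyhedra) are affine-equivalent if there is a nondegenerate affine map carrying the first onto the second and carrying each vertex, edge (and face) to the corresponding one. *)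

From HB Require Import structures.
From mathcomp Require Import all_boot all_order all_algebra.
From mathcomp Require Import reals.
Set Implicit Arguments. Unset Strict Implicit. Unset Printing Implicit Defensive.
Import Order.TTheory GRing.Theory Num.Theory.
Local Open Scope ring_scope.

Section Polyhedra.
Variable R : realType.

Definition dot (u w : 'rV[R]_3) : R := \sum_(i < 3) u 0 i * w 0 i.

(* A convex polyhedron is described by a finite vertex type V and the
   positions p : V -> R^3 of its vertices; the solid is conv (p V). *)
Variable V : finType.
Variable p : V -> 'rV[R]_3.

Definition exposed (S : {set V}) : Prop :=
  exists (n : 'rV[R]_3) (c : R), n != 0 /\
    (forall v, dot n (p v) <= c) /\
    (forall v, (dot n (p v) == c) = (v \in S)).

(* The solid conv(p V) has nonempty interior: no plane contains all vertices. *)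
Definition full_dimensional : Prop :=
  forall (n : 'rV[R]_3) (c : R), n != 0 -> exists v, dot n (p v) != c.

(* p describes a closed convex polyhedron (boundary of a 3-dimensional convex
   polytope) whose vertices are exactly the points p v (each one a vertex). *)
Definition closed_convex_polyhedron : Prop :=
  full_dimensional /\ forall v, exposed [set v].

Definition is_edge (e : {set V}) : Prop := exposed e /\ #|e| = 2%N.

(* Faces: 2-dimensional faces (facets), given by their vertex sets; the
   vertex set must span a plane.  Taking the faces to be the facets encodes
   strict convexity (no dihedral angle equal to pi). *)
Definition is_face (F : {set V}) : Prop :=
  exposed F /\
  exists u v w, [/\ u \in F, v \in F, w \in F &
    \rank (col_mx (p v - p u) (p w - p u)) = 2%N].

Definition simple_polyhedron : Prop :=
  closed_convex_polyhedron /\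
  forall v, exists e1 e2 e3,
    [/\ is_edge e1, is_edge e2 & is_edge e3] /\
    [/\ v \in e1, v \in e2 & v \in e3] /\
    [/\ e1 <> e2, e1 <> e3 & e2 <> e3] /\
    (forall e, is_edge e -> v \in e -> e = e1 \/ e = e2 \/ e = e3).

End Polyhedra.

Definition bij_on (X Y : Type) (A : X -> Prop) (B : Y -> Prop) (f : X -> Y) :=
  [/\ forall x, A x -> B (f x),
      forall x y, A x -> A y -> f x = f y -> x = y &
      forall y, B y -> exists x, A x /\ f x = y].

Definition comb_equiv (R : realType) (V V' : finType)
  (p : V -> 'rV[R]_3) (p' : V' -> 'rV[R]_3)
  (fV : V -> V') (fE fF : {set V} -> {set V'}) : Prop :=
  [/\ bijective fV,
      bij_on (is_edge p) (is_edge p') fE /\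
      bij_on (is_face p) (is_face p') fF,
      forall v e, is_edge p e -> (v \in e) = (fV v \in fE e),
      forall v F, is_face p F -> (v \in F) = (fV v \in fF F) &
      forall e F, is_edge p e -> is_face p F ->
        (e \subset F) = (fE e \subset fF F)].

(* The affine map x |-> x *m A + b is nondegenerate on the plane of the
   face F, i.e. its linear part is injective on the direction space
   spanned by the vectors p v - p u0 (v in F), u0 in F. *)
Definition nondegenerate_on (R : realType) (V : finType) (p : V -> 'rV[R]_3)
  (F : {set V}) (A : 'M[R]_3) : Prop :=
  exists2 u0, u0 \in F &
    forall c : V -> R,
      (\sum_(v in F) c v *: (p v - p u0)) *m A = 0 ->
      \sum_(v in F) c v *: (p v - p u0) = 0.

Definition face_affine_equiv (R : realType) (V V' : finType)
  (p : V -> 'rV[R]_3) (p' : V' -> 'rV[R]_3) (fV : V -> V') (F : {set V}) : Prop :=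
  exists (A : 'M[R]_3) (b : 'rV[R]_3),
    nondegenerate_on p F A /\ forall v, v \in F -> p v *m A + b = p' (fV v).

Definition affine_equiv (R : realType) (V V' : finType)
  (p : V -> 'rV[R]_3) (p' : V' -> 'rV[R]_3) (fV : V -> V') : Prop :=
  exists (A : 'M[R]_3) (b : 'rV[R]_3),
    A \in unitmx /\ forall v, p v *m A + b = p' (fV v).

(* Fix a vertex w0 of P.  As P is simple, w0 has exactly three neighbours and the
   three edge vectors at w0 are linearly independent, so some affine map T of R^3
   sends w0 and its neighbours to the corresponding vertices of P'.  Call a vertex
   good if T is correct at it and at all its neighbours.  If w is good and u is a
   neighbour of w, any other neighbour y of u lies on a face G spanned by the edges
   uw and uy; G also contains two neighbours of w, so T agrees with the affine map
   of the face G at three non-collinear points of G, hence on all of G, and in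
   particular at y.  Good vertices are therefore closed under adjacency, and since
   the edge graph of a convex polytope is connected (at any vertex that does not
   maximise a linear functional, some edge increases it), T is correct everywhere.
   Its linear part is invertible because the vertices of P' are not coplanar. *)

From HB Require Import structures.
From mathcomp Require Import all_boot all_order all_algebra.
From mathcomp Require Import boolp reals.
From mathcomp Require Import ring lra.
Set Implicit Arguments. Unset Strict Implicit. Unset Printing Implicit Defensive.
Import Order.TTheory GRing.Theory Num.Theory.
Local Open Scope ring_scope.

Section Cross.
Variable R : realType.
Implicit Types a b d u z n : 'rV[R]_3.

Definition cross a b : 'rV[R]_3 := \row_(j < 3)
  (if j == 0 :> nat then a 0 1 * b 0 2 - a 0 2 * b 0 1
   else if j == 1 :> nat then a 0 2 * b 0 0 - a 0 0 * b 0 2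
   else a 0 0 * b 0 1 - a 0 1 * b 0 0).

Lemma dot3 u z : dot u z = u 0 0 * z 0 0 + u 0 1 * z 0 1 + u 0 2 * z 0 2.
Proof.
rewrite /dot !big_ord_recr big_ord0 /= add0r.
by congr (_ * _ + _ * _ + _ * _); congr (_ _ _); apply/val_inj.
Qed.

Lemma rv3P u z : u 0 0 = z 0 0 -> u 0 1 = z 0 1 -> u 0 2 = z 0 2 -> u = z.
Proof.
move=> h0 h1 h2; apply/rowP => -[[|[|[|k]]] hk] //.
- by rewrite (_ : Ordinal hk = 0) //; apply/val_inj.
- by rewrite (_ : Ordinal hk = 1) //; apply/val_inj.
- by rewrite (_ : Ordinal hk = 2) //; apply/val_inj.
Qed.

Ltac coord_ring :=
  try apply: rv3P; rewrite ?dot3 ?mxE /=; ring.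

Lemma dotC u z : dot u z = dot z u. Proof. coord_ring. Qed.
Lemma dotDl u v z : dot (u + v) z = dot u z + dot v z. Proof. coord_ring. Qed.
Lemma dotBr u v z : dot z (u - v) = dot z u - dot z v. Proof. coord_ring. Qed.
Lemma dotNl u z : dot (- u) z = - dot u z. Proof. coord_ring. Qed.
Lemma dotZl k u z : dot (k *: u) z = k * dot u z. Proof. coord_ring. Qed.
Lemma dotZr k u z : dot z (k *: u) = k * dot z u. Proof. coord_ring. Qed.
Lemma dot0l z : dot 0 z = 0. Proof. coord_ring. Qed.
Lemma dot0r z : dot z 0 = 0. Proof. coord_ring. Qed.

Lemma dot_crossl a b : dot a (cross a b) = 0. Proof. coord_ring. Qed.
Lemma dot_crossr a b : dot b (cross a b) = 0. Proof. coord_ring. Qed.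
Lemma cross0l a : cross 0 a = 0. Proof. coord_ring. Qed.
Lemma dot_cross_rotl a b d : dot b (cross d a) = dot a (cross b d).
Proof. coord_ring. Qed.
Lemma dot_cross_rotr a b d : dot d (cross a b) = dot a (cross b d).
Proof. coord_ring. Qed.

Lemma cross_frame_decomposition a b z : let c := cross a b in
  dot c c *: z = (dot z a * dot b b - dot z b * dot a b) *: a
    + (dot z b * dot a a - dot z a * dot a b) *: b + dot z c *: c.
Proof. coord_ring. Qed.

Lemma dual_frame_decomposition z a b n :
  dot z (cross a b) *: n =
  dot n z *: cross a b + dot n a *: cross b z + dot n b *: cross z a.
Proof. coord_ring. Qed.

Lemma dot_self_ge0 u : 0 <= dot u u.
Proof. rewrite dot3; nra. Qed.

Lemma dot_self_gt0 u : u != 0 -> 0 < dot u u.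
Proof.
move=> hu; rewrite lt_neqAle dot_self_ge0 andbT eq_sym; apply: contra hu.
by rewrite dot3 => /eqP h; apply/eqP/rv3P; rewrite mxE; nra.
Qed.

Lemma cross_eq0_collinear n a : n != 0 -> cross n a = 0 ->
  a = (dot a n / dot n n) *: n.
Proof.
move=> hn hc; have nn0 : dot n n != 0 by rewrite gt_eqF ?dot_self_gt0.
have e : dot n n *: a = dot a n *: n + cross (cross n a) n by coord_ring.
rewrite hc cross0l addr0 in e.
by rewrite mulrC -scalerA -e scalerA mulVf ?scale1r.
Qed.

Lemma dot_frame_eq0 n a : cross n a != 0 -> forall z,
  dot z n = 0 -> dot z a = 0 -> dot z (cross n a) = 0 -> z = 0.
Proof.
move=> hc z h1 h2 h3; have := cross_frame_decomposition n a z; rewrite /= h1 h2 h3.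
rewrite !(mul0r, mulr0, subr0, scale0r, addr0) => /eqP.
by rewrite scaler_eq0 (gt_eqF (dot_self_gt0 hc)) => /eqP.
Qed.

Lemma coplanar_dot_cross_eq0 n z a b : n != 0 ->
  dot n z = 0 -> dot n a = 0 -> dot n b = 0 -> dot z (cross a b) = 0.
Proof.
move=> hn hz ha hb; have := dual_frame_decomposition z a b n.
rewrite hz ha hb !scale0r !addr0 => /eqP.
by rewrite scaler_eq0 (negbTE hn) orbF => /eqP.
Qed.

Lemma mulmx_tr_dot u z : u *m z^T = (dot u z)%:M.
Proof.
apply/matrixP => i j; rewrite !mxE !ord1 eqxx mulr1n.
by apply: eq_bigr => k _; rewrite !mxE.
Qed.

Lemma dot_mulmx u z (L : 'M[R]_3) : dot (u *m L) z = dot u (z *m L^T).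
Proof.
have e : (dot (u *m L) z)%:M = (dot u (z *m L^T))%:M :> 'M[R]_1.
  by rewrite -!mulmx_tr_dot trmx_mul trmxK mulmxA.
by move/matrixP/(_ 0 0): e; rewrite !mxE eqxx !mulr1n.
Qed.

Lemma rank_cross_neq0 a b : cross a b != 0 -> \rank (col_mx a b) = 2%N.
Proof.
move=> hc; set c := cross a b; apply/eqP; rewrite eqn_leq rank_leq_row /=.
have e : col_mx a b *m row_mx (cross b c)^T (cross c a)^T = (dot c c)%:M.
  rewrite mul_col_mx !mul_mx_row !mulmx_tr_dot scalar_mx_block.
  rewrite (dot_cross_rotr b c a) -/c dot_crossl (dot_cross_rotl b c a) -/c dot_crossr.
  by congr (block_mx _ _ _ _); apply/matrixP=> i j; rewrite !mxE mul0rn.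
have := mxrankM_maxl (col_mx a b) (row_mx (cross b c)^T (cross c a)^T).
by rewrite e mxrank_unit // unitmxE det_scalar unitfE expf_neq0 // gt_eqF ?dot_self_gt0.
Qed.

Lemma rank_col_mx_collinear (k l : R) d : (\rank (col_mx (k *: d) (l *: d)) <= 1)%N.
Proof.
have -> : col_mx (k *: d) (l *: d) = col_mx k%:M l%:M *m d.
  by rewrite mul_col_mx !mul_scalar_mx.
exact: leq_trans (mxrankM_maxr _ _) (rank_leq_row _).
Qed.

Lemma rank_col_mx_sub_distinct x y z :
  \rank (col_mx (y - x) (z - x)) = 2%N -> [/\ x != y, x != z & y != z].
Proof.
have low (k l : R) (d : 'rV[R]_3) : \rank (col_mx (k *: d) (l *: d)) != 2%N.
  by apply: contraTneq (rank_col_mx_collinear k l d) => ->.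
move=> hr; split; apply/eqP => e; move: hr; rewrite e ?subrr; apply/eqP.
- by move: (low 0 1 (z - y)); rewrite scale0r scale1r.
- by move: (low 1 0 (y - z)); rewrite scale0r scale1r.
- by move: (low 1 1 (z - x)); rewrite scale1r.
Qed.

Lemma mulmx_eq0_on_plane (a b z : 'rV[R]_3) (D : 'M[R]_3) : cross a b != 0 ->
  dot z (cross a b) = 0 -> a *m D = 0 -> b *m D = 0 -> z *m D = 0.
Proof.
move=> hc hz ha hb; have := cross_frame_decomposition a b z.
rewrite /= hz scale0r addr0 => /(congr1 (mulmx^~ D)).
rewrite -!scalemxAl mulmxDl -!scalemxAl ha hb !scaler0 addr0 => /eqP.
by rewrite scaler_eq0 (gt_eqF (dot_self_gt0 hc)) => /eqP.
Qed.

Lemma affine_eq_on_plane (x0 x1 x2 x : 'rV[R]_3) (L M : 'M[R]_3) (t s : 'rV[R]_3) :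
  cross (x1 - x0) (x2 - x0) != 0 -> dot (x - x0) (cross (x1 - x0) (x2 - x0)) = 0 ->
  x0 *m L + t = x0 *m M + s -> x1 *m L + t = x1 *m M + s ->
  x2 *m L + t = x2 *m M + s -> x *m L + t = x *m M + s.
Proof.
move=> hc hx e0 e1 e2.
have dE y (K : 'M[R]_3) k : (y - x0) *m K = (y *m K + k) - (x0 *m K + k).
  by rewrite [x0 *m K + k]addrC addrKA mulmxBl.
have dLM y : y *m L + t = y *m M + s -> (y - x0) *m (L - M) = 0.
  by move=> ey; rewrite mulmxBr (dE _ _ t) (dE _ M s) ey e0 subrr.
move/eqP: (mulmx_eq0_on_plane hc hx (dLM _ e1) (dLM _ e2)).
rewrite mulmxBr subr_eq0 (dE _ _ t) (dE _ M s) e0 => /eqP.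
by move/(congr1 (+%R^~ (x0 *m M + s))); rewrite !subrK.
Qed.

Lemma exists_affine_frame (x0 x1 x2 x3 y0 y1 y2 y3 : 'rV[R]_3) :
  dot (x1 - x0) (cross (x2 - x0) (x3 - x0)) != 0 ->
  exists L t, [/\ x0 *m L + t = y0, x1 *m L + t = y1,
                  x2 *m L + t = y2 & x3 *m L + t = y3].
Proof.
set d1 := x1 - x0; set d2 := x2 - x0; set d3 := x3 - x0 => hdet.
pose e1 := y1 - y0; pose e2 := y2 - y0; pose e3 := y3 - y0.
pose L := (dot d1 (cross d2 d3))^-1 *:
  ((cross d2 d3)^T *m e1 + (cross d3 d1)^T *m e2 + (cross d1 d2)^T *m e3).
have LE z : z *m L = (dot d1 (cross d2 d3))^-1 *:
    (dot z (cross d2 d3) *: e1 + dot z (cross d3 d1) *: e2 + dot z (cross d1 d2) *: e3).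
  by rewrite /L -scalemxAr 2!mulmxDr !mulmxA !mulmx_tr_dot !mul_scalar_mx.
pose t := y0 - x0 *m L.
have agree y e : (y - x0) *m L = e - y0 -> y *m L + t = e.
  by move=> h; rewrite /t addrCA -mulmxBl h addrC subrK.
exists L, t; split; first by rewrite /t addrC subrK.
- apply: agree; rewrite -/d1 LE dot_crossr dot_crossl !scale0r !addr0.
  by rewrite scalerA mulVf ?scale1r.
- apply: agree; rewrite -/d2 LE dot_crossl dot_crossr (dot_cross_rotl d1).
  by rewrite !scale0r addr0 add0r scalerA mulVf ?scale1r.
- apply: agree; rewrite -/d3 LE dot_crossl dot_crossr (dot_cross_rotr d1).
  by rewrite !scale0r !add0r scalerA mulVf ?scale1r.
Qed.
End Cross.

Section Extremum.
Variables (R : realType) (T : finType).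

Lemma exists_maxP (P : T -> Prop) (f : T -> R) x0 :
  P x0 -> exists2 m, P m & forall y, P y -> f y <= f m.
Proof.
move=> /asboolT Px0; case: (@arg_maxP _ _ _ x0 (fun x => `[<P x>]) f Px0).
by move=> m /asboolP Pm hm; exists m => // y /asboolT; apply: hm.
Qed.

Lemma exists_pos_lower_bound (P : T -> Prop) (f : T -> R) :
  (forall x, P x -> 0 < f x) -> exists2 eps, 0 < eps & forall x, P x -> eps <= f x.
Proof.
move=> hf; have [[x0 Px0]|none] := pselect (exists x, P x); last first.
  by exists 1 => // x Px; case: none; exists x.
have [m Pm hm] := exists_maxP (fun x => - f x) Px0.
by exists (f m); [exact: hf | move=> x /hm; rewrite lerN2].
Qed.
End Extremum.

Section ConvexPolytope.
Variables (R : realType) (V : finType) (p : V -> 'rV[R]_3).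
Hypothesis p_vertices : forall v, exposed p [set v].

Definition supports_vertex w n c :=
  [/\ n != 0, forall x, dot n (p x) <= c & forall x, (dot n (p x) == c) = (x == w)].

Lemma exists_supports_vertex w : exists n c, supports_vertex w n c.
Proof.
have [n [c [hn [hle he]]]] := p_vertices w.
by exists n, c; split=> // x; rewrite he in_set1.
Qed.

Lemma vertex_inj : injective p.
Proof.
move=> x y hxy; have [n [c [_ _ he]]] := exists_supports_vertex x.
by apply/eqP; rewrite eq_sym -he -hxy he.
Qed.

Lemma vertex_not_inside_segment w y z mu : y != w -> y != z -> 0 < mu < 1 ->
  p y - p w = mu *: (p z - p w) -> False.
Proof.
move=> hyw hyz /andP[mu0 mu1] e.
have [n [c [_ hle he]]] := exists_supports_vertex y.
have hy : dot n (p y) = c by apply/eqP; rewrite he.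
have hw : dot n (p w) < c by rewrite lt_neqAle hle he eq_sym hyw.
have hz : dot n (p z) < c by rewrite lt_neqAle hle he eq_sym hyz.
have := congr1 (dot n) e; rewrite dotZr !dotBr hy; nra.
Qed.

Lemma eq_of_same_ray w x u lam : x != w -> u != w -> 0 < lam ->
  p x - p w = lam *: (p u - p w) -> x = u.
Proof.
move=> hxw huw lam0 e; have [//|hxu] := eqVneq x u; exfalso.
case: (ltrgtP lam 1) => lam1.
- by apply: (vertex_not_inside_segment hxw hxu _ e); rewrite lam0.
- have hux : u != x by rewrite eq_sym.
  apply: (vertex_not_inside_segment (mu := lam^-1) huw hux).
    by rewrite invr_gt0 lam0 invf_lt1.
  by rewrite e scalerA mulVf ?scale1r ?gt_eqF.
- move: e; rewrite lam1 scale1r => /(congr1 (+%R^~ (p w))); rewrite !subrK.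
  by move/vertex_inj/eqP; rewrite (negbTE hxu).
Qed.

Lemma edge_of_strict_support w u y g : u != w -> y != w -> y != u ->
  dot g (p u - p w) = 0 -> (forall x, x != w -> x != u -> dot g (p x - p w) < 0) ->
  is_edge p [set w; u].
Proof.
move=> huw hyw hyu hu hlt; split; last by rewrite cards2 eq_sym huw.
exists g, (dot g (p w)); split; [|split].
- by apply: contraTneq (hlt y hyw hyu) => ->; rewrite dot0l ltxx.
- move=> v; rewrite -subr_le0 -dotBr.
  have [->|hvw] := eqVneq v w; first by rewrite subrr dot0r.
  have [->|hvu] := eqVneq v u; first by rewrite hu.
  exact/ltW/hlt.
- move=> v; rewrite in_set2 -subr_eq0 -dotBr.
  have [->|hvw] := eqVneq v w; first by rewrite subrr dot0r eqxx.
  have [->|hvu] := eqVneq v u; first by rewrite hu eqxx.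
  by rewrite lt_eqF ?hlt.
Qed.

Lemma exposed_normal_at G w : exposed p G -> w \in G -> exists m,
  [/\ m != 0, forall z, dot m (p z - p w) <= 0 & forall z, (dot m (p z - p w) == 0) = (z \in G)].
Proof.
case=> m [c [hm [hle he]]] hwG; have /eqP hw : dot m (p w) == c by rewrite he.
by exists m; split=> // z; rewrite dotBr hw ?subr_le0 ?subr_eq0.
Qed.

Lemma exposed_below_normal w m : m != 0 -> (forall z, dot m (p z - p w) <= 0) ->
  exposed p [set z | dot m (p z - p w) == 0].
Proof.
move=> hm hle; exists m, (dot m (p w)); split=> //; split=> z.
  by have := hle z; rewrite dotBr subr_le0.
by rewrite inE dotBr subr_eq0.
Qed.

Lemma face_two_other_vertices G w : is_face p G ->
  exists x y, [/\ x != y, x != w, y != w, x \in G & y \in G].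
Proof.
case=> _ [x1 [x2 [x3 [i1 i2 i3 /rank_col_mx_sub_distinct [d12 d13 d23]]]]].
have neq x y : p x != p y -> x != y by apply: contra_neq => ->.
have [n12 n13 n23] : [/\ x1 != x2, x1 != x3 & x2 != x3] by split; apply: neq.
have [<-|n1] := eqVneq x1 w; first by exists x2, x3; split; rewrite // eq_sym.
have [<-|n2] := eqVneq x2 w; first by exists x1, x3; split; rewrite // eq_sym.
by exists x1, x2.
Qed.

Section Vertex.
Variables (w : V) (n : 'rV[R]_3) (c : R).
Hypothesis supp : supports_vertex w n c.

Definition slack x := c - dot n (p x).

Definition ratio a x := dot a (p x - p w) / slack x.

Lemma slack_gt0 x : x != w -> 0 < slack x.
Proof.
by case: supp => _ hle he hxw; rewrite subr_gt0 lt_neqAle hle he hxw.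
Qed.

Lemma dot_normal_sub x : dot n (p x - p w) = - slack x.
Proof.
case: supp => _ _ he; have /eqP hw : dot n (p w) == c by rewrite he.
by rewrite dotBr hw opprB.
Qed.

Lemma dot_sub_ratio a x : x != w -> dot a (p x - p w) = ratio a x * slack x.
Proof. by move=> hxw; rewrite divfK ?gt_eqF ?slack_gt0. Qed.

Lemma cross_sub_neq0 x y : x != w -> y != w -> x != y ->
  cross (p x - p w) (p y - p w) != 0.
Proof.
move=> hxw hyw hxy; apply/eqP => h0.
have dx0 : p x - p w != 0.
  by rewrite subr_eq0; apply: contra hxw => /eqP/vertex_inj ->.
have e := cross_eq0_collinear dx0 h0; set lam := _ / _ in e.
have := congr1 (dot n) e; rewrite dotZr !dot_normal_sub => hl.
have sx := slack_gt0 hxw; have sy := slack_gt0 hyw.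
have lam0 : 0 < lam by nra.
by move/negP: hxy; apply; apply/eqP/esym/(eq_of_same_ray hyw hxw lam0 e).
Qed.

Lemma cross_normal_neq0 y a : y != w -> dot a (p y - p w) = 0 -> a != 0 ->
  cross n a != 0.
Proof.
case: supp => hn _ _ hyw hd; apply: contra => /eqP h0.
have e := cross_eq0_collinear hn h0; set lam := _ / _ in e.
move: hd; rewrite e dotZl dot_normal_sub => hl.
have sy := slack_gt0 hyw; have -> : lam = 0 by nra.
by rewrite scale0r.
Qed.

(* Seen from [w], [ratio a x] compares the growth of [a] along the ray towards [x]
   with the depth of [x] below the supporting plane of [w].  A lexicographic
   maximiser [u] of [(ratio a, ratio b)] spans an edge with [w]: tilting
   [a + eps *: b] by a multiple of [n] yields a plane touching exactly [w] and [u]. *)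
Section LexMax.
Variables a b : 'rV[R]_3.

Definition lex_max u := u != w /\ forall x, x != w -> x != u ->
  ratio a x < ratio a u \/ (ratio a x = ratio a u /\ ratio b x < ratio b u).

Lemma lex_max_perturb u : lex_max u -> exists2 eps, 0 < eps &
  forall x, x != w -> x != u -> ratio a x + eps * ratio b x < ratio a u + eps * ratio b u.
Proof.
case=> huw hlex; have den_gt0 (r : R) : 0 < `|r| + 1 by have := normr_ge0 r; lra.
pose e x := if ratio a x < ratio a u
  then (ratio a u - ratio a x) / (`|ratio b x - ratio b u| + 1) else 1.
have [eps eps0 heps] : exists2 eps, 0 < eps & forall x, x != w /\ x != u -> eps <= e x.
  apply: exists_pos_lower_bound => x _; rewrite /e; case: ifP => // hlt.
  by rewrite divr_gt0 ?subr_gt0.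
exists eps => // x hxw hxu; case: (hlex x hxw hxu) => [hlt|[-> hlt]].
- have := heps x (conj hxw hxu); rewrite /e hlt ler_pdivlMr // => h.
  have := ler_norm (ratio b x - ratio b u); nra.
- by rewrite ltrD2l ltr_pM2l.
Qed.

Lemma lex_max_edge u y : lex_max u -> y != w -> y != u -> is_edge p [set w; u].
Proof.
move=> hu hyw hyu; have [eps eps0 heps] := lex_max_perturb hu.
set K := ratio a u + eps * ratio b u.
have hg v : v != w -> dot (a + eps *: b + K *: n) (p v - p w) =
    slack v * (ratio a v + eps * ratio b v - K).
  by move=> hvw; rewrite !dotDl !dotZl dot_normal_sub !dot_sub_ratio //; ring.
apply: (edge_of_strict_support (g := a + eps *: b + K *: n) hu.1 hyw hyu).
  by rewrite hg ?hu.1 // subrr mulr0.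
by move=> x hxw hxu; rewrite hg // pmulr_rlt0 ?slack_gt0 // subr_lt0 heps.
Qed.

Lemma lex_max_ratio_ge u x : lex_max u -> x != w -> ratio a x <= ratio a u.
Proof.
case=> _ hlex hxw; have [->//|hxu] := eqVneq x u.
by case: (hlex x hxw hxu) => [/ltW|[-> _]].
Qed.

Hypothesis frame : forall z, dot z n = 0 -> dot z a = 0 -> dot z b = 0 -> z = 0.

Lemma ratio2_inj x u : x != w -> u != w ->
  ratio a x = ratio a u -> ratio b x = ratio b u -> x = u.
Proof.
move=> hxw huw ea eb; have sx := slack_gt0 hxw; have su := slack_gt0 huw.
pose z := slack u *: (p x - p w) - slack x *: (p u - p w).
have z0 : z = 0.
  apply: frame; rewrite /z dotC dotBr !dotZr ?dot_normal_sub.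
  - ring.
  - by rewrite !dot_sub_ratio // ea; ring.
  - by rewrite !dot_sub_ratio // eb; ring.
apply: (eq_of_same_ray (lam := slack x / slack u) hxw huw); first exact: divr_gt0.
move/eqP: z0; rewrite subr_eq0 => /eqP e.
by rewrite mulrC -scalerA -e scalerA mulVf ?scale1r ?gt_eqF.
Qed.

Lemma exists_lex_max x0 : x0 != w -> exists u, lex_max u.
Proof.
move=> hx0; have [m hmw hm] := exists_maxP (P := fun x => x != w) (ratio a) hx0.
have [u [huw hum] hu] := exists_maxP (P := fun x => x != w /\ ratio a x = ratio a m)
  (ratio b) (conj hmw erefl).
exists u; split=> // x hxw hxu.
have := hm x hxw; rewrite -hum le_eqVlt => /orP[/eqP ea|]; last by left.
right; split=> //; rewrite hum in ea.
have := hu x (conj hxw ea); rewrite le_eqVlt => /orP[/eqP eb|//].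
by case/eqP: hxu; apply: ratio2_inj; rewrite ?ea ?hum.
Qed.
End LexMax.

Lemma lex_max_in_exposed (G : {set V}) m b u x :
  (forall z, dot m (p z - p w) <= 0) -> (forall z, (dot m (p z - p w) == 0) = (z \in G)) ->
  x \in G -> x != w -> lex_max m b u -> u \in G.
Proof.
move=> hle hmG hxG hxw hu; rewrite -hmG eq_le hle (dot_sub_ratio _ hu.1) /=.
apply: mulr_ge0; last exact/ltW/slack_gt0/hu.1.
apply: le_trans (lex_max_ratio_ge hu hxw).
by move: hxG; rewrite -hmG /ratio => /eqP ->; rewrite mul0r.
Qed.

Lemma lex_max_opp_neq a b u1 u2 z : lex_max a b u1 -> lex_max a (- b) u2 ->
  z != w -> z != u1 -> ratio a z = ratio a u1 -> u1 != u2.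
Proof.
move=> [_ hu1] [_ hu2] hzw hzu ez; apply/eqP => e; rewrite -e in hu2.
case: (hu1 z hzw hzu) => [|[_ lt1]]; first by rewrite ez ltxx.
case: (hu2 z hzw hzu) => [|[_]]; first by rewrite ez ltxx.
by rewrite /ratio !dotNl !mulNr ltrN2 => /(lt_trans lt1); rewrite ltxx.
Qed.
End Vertex.

Lemma affine_eq_on_face G w a b (L M : 'M[R]_3) (t s : 'rV[R]_3) :
  is_face p G -> w \in G -> a \in G -> b \in G -> a != w -> b != w -> a != b ->
  p w *m L + t = p w *m M + s -> p a *m L + t = p a *m M + s ->
  p b *m L + t = p b *m M + s -> forall x, x \in G -> p x *m L + t = p x *m M + s.
Proof.
move=> [hG _] hwG haG hbG haw hbw hab ew ea eb x hxG.
have [m [hm _ hmG]] := exposed_normal_at hG hwG.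
have hG0 z : z \in G -> dot m (p z - p w) = 0 by rewrite -hmG => /eqP.
have [n [c supp]] := exists_supports_vertex w.
apply: (affine_eq_on_plane (cross_sub_neq0 supp haw hbw hab) _ ew ea eb).
exact: coplanar_dot_cross_eq0 hm (hG0 _ hxG) (hG0 _ haG) (hG0 _ hbG).
Qed.
End ConvexPolytope.

Section SimplePolyhedron.
Variables (R : realType) (V : finType) (p : V -> 'rV[R]_3).
Hypothesis simple_p : simple_polyhedron p.
Implicit Types u v w x y : V.

Let p_full : full_dimensional p. Proof. by case: simple_p => -[]. Qed.
Let p_vertices : forall v, exposed p [set v]. Proof. by case: simple_p => -[]. Qed.

Definition adjacent w u := is_edge p [set w; u].

Lemma adjacent_neq w u : adjacent w u -> u != w.
Proof. by case=> _; apply: contraPneq => ->; rewrite setUid cards1. Qed.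

Lemma adjacent_sym w u : adjacent w u -> adjacent u w.
Proof. by rewrite /adjacent setUC. Qed.

Lemma edge_set2 e w : is_edge p e -> w \in e -> exists2 u, u != w & e = [set w; u].
Proof.
case=> _ /eqP/cards2P [x [y [hxy ->]]]; rewrite in_set2 => /orP[/eqP->|/eqP->].
  by exists y => //; rewrite eq_sym.
by exists x; rewrite // setUC.
Qed.

Lemma neighbors3 w : exists u1 u2 u3,
  [/\ [/\ adjacent w u1, adjacent w u2 & adjacent w u3],
      [/\ u1 != u2, u1 != u3 & u2 != u3] &
      forall u, adjacent w u -> u = u1 \/ u = u2 \/ u = u3].
Proof.
case: simple_p => _ /(_ w) [e1 [e2 [e3 [[h1 h2 h3] [[i1 i2 i3] [[d12 d13 d23] hall]]]]]].
have [u1 _ E1] := edge_set2 h1 i1; have [u2 _ E2] := edge_set2 h2 i2.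
have [u3 _ E3] := edge_set2 h3 i3.
have set2_inj u u' : u != w -> [set w; u] = [set w; u'] -> u = u'.
  move=> huw e; have : u \in [set w; u'] by rewrite -e set22.
  by rewrite in_set2 (negbTE huw) => /eqP.
exists u1, u2, u3; split; first by rewrite /adjacent -E1 -E2 -E3.
  by split; apply/eqP => e; [apply: d12 | apply: d13 | apply: d23];
     rewrite ?E1 ?E2 ?E3 e.
move=> u hu; have /adjacent_neq huw := hu.
by move: (hall _ hu (set21 _ _)); rewrite E1 E2 E3 => -[|[|]] /(set2_inj _ _ huw); auto.
Qed.

Lemma third_neighbor w ua ub : adjacent w ua -> adjacent w ub -> ua != ub ->
  exists v0, forall v, adjacent w v -> v = ua \/ v = ub \/ v = v0.
Proof.
move=> ha hb hab; have [u1 [u2 [u3 [_ _ hall]]]] := neighbors3 w.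
case: (hall _ ha) hab => [->|[->|->]]; case: (hall _ hb) => [->|[->|->]];
  rewrite ?eqxx // => _;
  [exists u3 | exists u2 | exists u3 | exists u1 | exists u2 | exists u1];
  by move=> v /hall [|[|]] ->; first [by left | by right; left | by right; right].
Qed.

Lemma exists_vertex_off w u : exists2 y, y != w & y != u.
Proof.
have [u1 [u2 [_ [[adj1 adj2 _] [d12 _ _] _]]]] := neighbors3 w.
have /adjacent_neq n1 := adj1; have /adjacent_neq n2 := adj2.
have [e1|] := eqVneq u1 u; last by exists u1.
by exists u2; rewrite // -e1 eq_sym.
Qed.

Lemma exists_improving_neighbor w x a : 0 < dot a (p x - p w) ->
  exists2 u, adjacent w u & 0 < dot a (p u - p w).
Proof.
move=> hpos; have [n [c supp]] := exists_supports_vertex p_vertices w.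
have hxw : x != w by apply: contraTneq hpos => ->; rewrite subrr dot0r ltxx.
have [hc|hc] := eqVneq (cross n a) 0.
  (* [a] is then a negative multiple of [n], so every neighbour improves. *)
  have [u1 [_ [_ [[adj1 _ _] _ _]]]] := neighbors3 w.
  have [hn _ _] := supp; have e := cross_eq0_collinear hn hc.
  exists u1 => //; move: hpos; rewrite e !dotZl !(dot_normal_sub supp).
  have := slack_gt0 supp hxw; have := slack_gt0 supp (adjacent_neq adj1); nra.
have [u hu] := exists_lex_max p_vertices supp (dot_frame_eq0 hc) hxw.
have [y hyw hyu] := exists_vertex_off w u.
exists u; first exact: (lex_max_edge supp hu hyw hyu).
rewrite (dot_sub_ratio supp _ hu.1) mulr_gt0 ?(slack_gt0 supp hu.1) //.
apply: lt_le_trans (lex_max_ratio_ge hu hxw).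
by rewrite /ratio divr_gt0 ?(slack_gt0 supp hxw).
Qed.

Lemma below_neighbors_below_all w m :
  (forall u, adjacent w u -> dot m (p u - p w) <= 0) -> forall x, dot m (p x - p w) <= 0.
Proof.
move=> hN x; rewrite leNgt; apply/negP => /exists_improving_neighbor [u adj].
by rewrite ltNge hN.
Qed.

Lemma neighbor_frame w u1 u2 u3 : adjacent w u2 -> adjacent w u3 -> u2 != u3 ->
  (forall u, adjacent w u -> u = u1 \/ u = u2 \/ u = u3) ->
  dot (p u1 - p w) (cross (p u2 - p w) (p u3 - p w)) != 0.
Proof.
move=> adj2 adj3 d23 hall; have [n [c supp]] := exists_supports_vertex p_vertices w.
set m := cross _ _; apply/eqP => hdet.
have hm : m != 0 := cross_sub_neq0 p_vertices supp (adjacent_neq adj2) (adjacent_neq adj3) d23.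
have on_m u : adjacent w u -> dot m (p u - p w) = 0.
  by move=> /hall [|[|]] ->; rewrite dotC ?hdet ?dot_crossl ?dot_crossr.
have below (s : R) x : dot (s *: m) (p x - p w) <= 0.
  by apply: below_neighbors_below_all => u /on_m; rewrite dotZl => ->; rewrite mulr0.
have [v] := p_full (dot m (p w)) hm; rewrite -subr_eq0 -dotBr eq_le.
by have := below 1 v; have := below (-1) v; rewrite !dotZl mul1r mulN1r oppr_le0 => -> ->.
Qed.

Lemma exists_face_through_adjacent w ua ub : adjacent w ua -> adjacent w ub -> ua != ub ->
  exists G, [/\ is_face p G, w \in G, ua \in G & ub \in G].
Proof.
move=> ha hb hab; have [n [c supp]] := exists_supports_vertex p_vertices w.
have [v0 hall] := third_neighbor ha hb hab.
set m := cross (p ua - p w) (p ub - p w).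
have hm : m != 0 := cross_sub_neq0 p_vertices supp (adjacent_neq ha) (adjacent_neq hb) hab.
pose s : R := if dot m (p v0 - p w) <= 0 then 1 else -1.
have hsa : dot (s *: m) (p ua - p w) = 0 by rewrite dotZl dotC dot_crossl mulr0.
have hsb : dot (s *: m) (p ub - p w) = 0 by rewrite dotZl dotC dot_crossr mulr0.
have below x : dot (s *: m) (p x - p w) <= 0.
  apply: below_neighbors_below_all => v /hall [|[|]] ->; rewrite ?hsa ?hsb // dotZl /s.
  by case: ifP => [|/negbT]; rewrite ?mul1r // mulN1r oppr_le0 -ltNge => /ltW.
have hsm : s *: m != 0.
  by rewrite scaler_eq0 negb_or hm andbT /s; case: ifP; rewrite ?oppr_eq0 oner_eq0.
pose G := [set x | dot (s *: m) (p x - p w) == 0].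
have inG x : dot (s *: m) (p x - p w) = 0 -> x \in G by rewrite inE => ->.
exists G; split; rewrite ?inG ?subrr ?dot0r //; split.
  exact: exposed_below_normal hsm below.
by exists w, ua, ub; rewrite !inG ?subrr ?dot0r // rank_cross_neq0.
Qed.

Lemma face_adjacent_pair G w : is_face p G -> w \in G ->
  exists a b, [/\ a != b, adjacent w a, adjacent w b, a \in G & b \in G].
Proof.
move=> hF hwG; have [x [y [hxy hxw hyw hxG hyG]]] := face_two_other_vertices w hF.
have [m [hm hle hmG]] := exposed_normal_at hF.1 hwG.
have [n [c supp]] := exists_supports_vertex p_vertices w.
have hmx : dot m (p x - p w) = 0 by apply/eqP; rewrite hmG.
have hc := cross_normal_neq0 supp hxw hmx hm.
have frameN : forall z, dot z n = 0 -> dot z m = 0 -> dot z (- cross n m) = 0 -> z = 0.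
  move=> z h1 h2; rewrite dotC dotNl dotC => /eqP; rewrite oppr_eq0 => /eqP.
  exact: dot_frame_eq0 hc z h1 h2.
have [u1 hu1] := exists_lex_max p_vertices supp (dot_frame_eq0 hc) hxw.
have [u2 hu2] := exists_lex_max p_vertices supp frameN hxw.
have inG := lex_max_in_exposed supp hle hmG hxG hxw.
have adj b u : lex_max p w n c m b u -> adjacent w u.
  by move=> hu; have [v hvw hvu] := exists_vertex_off w u; exact: (lex_max_edge supp hu hvw hvu).
exists u1, u2; split; [|exact: adj _ _ hu1|exact: adj _ _ hu2|exact: inG _ _ hu1|exact: inG _ _ hu2].
have [z [hzw hzu hzG]] : exists z, [/\ z != w, z != u1 & z \in G].
  by have [ex|] := eqVneq x u1; [exists y; split; rewrite // -ex eq_sym | exists x].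
apply: (lex_max_opp_neq hu1 hu2 hzw hzu).
have r0 v : v \in G -> ratio p w n c m v = 0 by rewrite -hmG /ratio => /eqP ->; rewrite mul0r.
by rewrite !r0 //; exact: inG _ _ hu1.
Qed.

Lemma edge_graph_connected (S : V -> Prop) w0 : S w0 ->
  (forall w u, S w -> adjacent w u -> S u) -> forall x, S x.
Proof.
move=> S0 Sadj x; have [nx [cx [_ hle he]]] := exists_supports_vertex p_vertices x.
have [m Sm hmax] := exists_maxP (fun v => dot nx (p v)) S0.
have [->//|hxm] := eqVneq x m.
have hpos : 0 < dot nx (p x - p m).
  rewrite dotBr subr_gt0; have /eqP -> : dot nx (p x) == cx by rewrite he.
  by rewrite lt_neqAle hle he eq_sym hxm.
have [u adj hu] := exists_improving_neighbor hpos.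
by have := hmax u (Sadj _ _ Sm adj); rewrite leNgt -subr_gt0 -dotBr hu.
Qed.

Lemma affine_agreement_propagates (V' : finType) (p' : V' -> 'rV[R]_3) (fV : V -> V')
    (L : 'M[R]_3) (t : 'rV[R]_3) w u :
  (forall G, is_face p G -> face_affine_equiv p p' fV G) ->
  p w *m L + t = p' (fV w) -> (forall v, adjacent w v -> p v *m L + t = p' (fV v)) ->
  adjacent w u -> forall y, adjacent u y -> p y *m L + t = p' (fV y).
Proof.
move=> face_equiv agw agN adj y adj'; have [->//|hyw] := eqVneq y w.
have hwy : w != y by rewrite eq_sym.
have [G [hG _ hwG hyG]] := exists_face_through_adjacent (adjacent_sym adj) adj' hwy.
have [a [b [hab adja adjb haG hbG]]] := face_adjacent_pair hG hwG.
have [M [s [_ hM]]] := face_equiv G hG.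
rewrite -(hM y hyG).
have [naw nbw] := (adjacent_neq adja, adjacent_neq adjb).
apply: (affine_eq_on_face p_vertices hG hwG haG hbG naw nbw hab) => //;
  by rewrite hM ?agw ?agN.
Qed.
End SimplePolyhedron.

Lemma unitmx_of_full_dimensional_image (R : realType) (V : finType) (q : V -> 'rV[R]_3)
    (L : 'M[R]_3) (t : 'rV[R]_3) :
  full_dimensional q -> (forall y, exists x, x *m L + t = q y) -> L \in unitmx.
Proof.
move=> q_full onto; apply: contraT; rewrite unitmxE unitfE negbK -det_tr.
case/det0P => v hv0 hvL; have [y] := q_full v (dot v t) hv0.
have [x <-] := onto y.
by rewrite dotC dotDl dot_mulmx hvL dot0r add0r dotC eqxx.
Qed.

Lemma full_dimensional_inhabited (R : realType) (V : finType) (p : V -> 'rV[R]_3) :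
  full_dimensional p -> inhabited V.
Proof.
move=> p_full; suff [v _] : exists v, dot (const_mx 1) (p v) != 0 by [].
apply: p_full; apply/eqP => /matrixP/(_ 0 0); rewrite !mxE; apply/eqP; exact: oner_neq0.
Qed.

Theorem theorem4 (R : realType) (V V' : finType)
  (p : V -> 'rV[R]_3) (p' : V' -> 'rV[R]_3)
  (fV : V -> V') (fE fF : {set V} -> {set V'}) :
  simple_polyhedron p -> simple_polyhedron p' ->
  comb_equiv p p' fV fE fF ->
  (forall F : {set V}, is_face p F -> face_affine_equiv p p' fV F) ->
  affine_equiv p p' fV.
Proof.
move=> simple_p [[p'_full _] _] [[g _ gK] _ _ _ _] face_equiv.
have [w0] := full_dimensional_inhabited simple_p.1.1.
have [u1 [u2 [u3 [[adj1 adj2 adj3] [_ _ d23] nbrs]]]] := neighbors3 simple_p w0.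
have [L [t [ag0 ag1 ag2 ag3]]] := exists_affine_frame (p' (fV w0)) (p' (fV u1))
  (p' (fV u2)) (p' (fV u3)) (neighbor_frame simple_p adj2 adj3 d23 nbrs).
pose agree v := p v *m L + t = p' (fV v).
pose good w := agree w /\ forall u, adjacent p w u -> agree u.
have all_good : forall w, good w.
  apply: (edge_graph_connected simple_p (w0 := w0)) => [|w u [agw agN] adj].
    by split=> // u /nbrs [|[|]] ->.
  split; [exact: agN | exact: (affine_agreement_propagates simple_p face_equiv agw agN adj)].
exists L, t; split; last by move=> v; case: (all_good v).
apply: (unitmx_of_full_dimensional_image (t := t) p'_full) => y.
by exists (p (g y)); have := (all_good (g y)).1; rewrite /agree gK.
Qed.
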